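(* Let $r\ge2$ and let $\mu_1,\dots,\mu_r$, $P_{\vec n}$, the nearest neighbor recurrence coefficients $a_{\vec n,j},b_{\vec n,j}$ and the marginal recurrence coefficients $a_n^2(\mu_i),b_n(\mu_i)$ be as in the context. Suppose that $b_{\vec n,i}\ne b_{\vec n,j}$ for all $\vec n\in\mathbb{N}^r$ and all $1\le i\ne j\le r$. Then the nearest neighbor recurrence coefficients $a_{\vec n,j},b_{\vec n,j}$ ($\vec n\in\mathbb{N}^r$, $1\le j\le r$) can be computed (recursively in $|\vec n|$) from the relations, valid for all $1\le i\ne j\le r$, \begin{align*} b_{\vec n+\vec e_i,j}-b_{\vec n,j} &= b_{\vec n+\vec e_j,i}-b_{\vec n,i},\\ \sum_{k=1}^r a_{\vec n+\vec e_j,k}-\sum_{k=1}^r a_{\vec n+\vec e_i,k} &= b_{\vec n+\vec e_j,i}\,b_{\vec n,j}-b_{\vec n,i}\,b_{\vec n+\vec e_i,j},\\ \frac{a_{\vec n+\vec e_j,i}}{a_{\vec n,i}} &= \frac{b_{\vec n,j}-b_{\vec n,i}}{b_{\vec n-\vec e_i,j}-b_{\vec n-\vec e_i,i}} \quad(\text{when } n_i\ge1), \end{align*} and the boundary conditions $a_{n\vec e_j,j}=a_n^2(\mu_j)$, $b_{n\vec e_j,j}=b_n(\mu_j)$ for $n\ge0$, $1\le j\le r$ (with $a_0^2(\mu_j)=0$), and $a_{n\vec e_i,j}=0$ for $n\ge0$, $i\ne j$; i.e. these relations and boundary conditions determine all nearest neighbor recurrence coefficients uniquely.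
   Context: Let $\mu_1,\dots,\mu_r$ be positive Borel measures on $\mathbb{R}$ with all moments finite, forming a normal system: for every multi-index $\vec n=(n_1,\dots,n_r)\in\mathbb{N}^r$ there is a unique monic polynomial $P_{\vec n}$ of degree $|\vec n|=n_1+\dots+n_r$ with $\int x^kP_{\vec n}(x)\,d\mu_j(x)=0$ for $0\le k\le n_j-1$, $1\le j\le r$. Set $P_{\vec n}=0$ if some component of $\vec n$ is negative; $\vec e_1,\dots,\vec e_r$ are the standard unit vectors. The nearest neighbor recurrence relations are \[ xP_{\vec n}(x)=P_{\vec n+\vec e_k}(x)+b_{\vec n,k}P_{\vec n}(x)+\sum_{j=1}^r a_{\vec n,j}P_{\vec n-\vec e_j}(x),\qquad 1\le k\le r, \] defining the real numbers $a_{\vec n,j},b_{\vec n,k}$, with the convention $a_{\vec n,j}=0$ whenever $n_j=0$ (such coefficients multiply the zero polynomial). For each $i$, $P_n(x;\mu_i)$ are the monic orthogonal polynomials for $\mu_i$, with $xP_n(x;\mu_i)=P_{n+1}(x;\mu_i)+b_n(\mu_i)P_n(x;\mu_i)+a_n^2(\mu_i)P_{n-1}(x;\mu_i)$, $P_0=1$, $P_{-1}=0$. The three displayed relations in the claim are known to hold for the nearest neighbor recurrence coefficients. *)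

From mathcomp Require Import all_boot all_algebra all_classical all_reals all_analysis.

Set Implicit Arguments.
Unset Strict Implicit.
Unset Printing Implicit Defensive.

Import GRing.Theory Num.Theory.
Local Open Scope ring_scope.

Definition mindex (r : nat) := {ffun 'I_r -> nat}.

Section Defs.
Context {R : realType} {r : nat}.

Definition mabs (n : mindex r) : nat := (\sum_(i < r) n i)%N.
Definition mup (n : mindex r) (i : 'I_r) : mindex r :=
  [ffun k => (n k + (k == i))%N].
(* n - e_i  (only used when n_i >= 1) *)
Definition mdown (n : mindex r) (i : 'I_r) : mindex r :=
  [ffun k => (n k - (k == i))%N].
Definition munit (i : 'I_r) (m : nat) : mindex r :=
  [ffun k => if k == i then m else 0%N].

Definition finite_moments (mu : 'I_r -> {measure set R -> \bar R}) : Prop :=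
  forall i k, (mu i).-integrable setT (fun x : R => (x ^+ k)%:E).

Definition is_mop (mu : 'I_r -> {measure set R -> \bar R}) (n : mindex r)
  (p : {poly R}) : Prop :=
  [/\ p \is monic, size p = (mabs n).+1 &
      forall (j : 'I_r) (k : nat), (k < n j)%N ->
        (\int[mu j]_x ((x ^+ k * p.[x])%:E) = 0)%E].

Definition normal_system (mu : 'I_r -> {measure set R -> \bar R}) : Prop :=
  forall n : mindex r, exists! p : {poly R}, is_mop mu n p.

(* a, b are the nearest neighbor recurrence coefficients of the family P
   (with P_{n - e_j} = 0 when n_j = 0, and the convention a_{n,j} = 0 then) *)
Definition nn_recurrence (P : mindex r -> {poly R}) (a b : mindex r -> 'I_r -> R)
  : Prop :=
  (forall (n : mindex r) (k : 'I_r),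
     'X * P n = P (mup n k) + b n k *: P n
                + \sum_(j < r | (0 < n j)%N) a n j *: P (mdown n j))
  /\ (forall (n : mindex r) (j : 'I_r), n j = 0%N -> a n j = 0).

Definition is_op (nu : {measure set R -> \bar R}) (m : nat) (p : {poly R}) : Prop :=
  [/\ p \is monic, size p = m.+1 &
      forall k : nat, (k < m)%N -> (\int[nu]_x ((x ^+ k * p.[x])%:E) = 0)%E].

Definition three_term (Q : nat -> {poly R}) (a2 bm : nat -> R) : Prop :=
  (forall m : nat,
     'X * Q m = Q m.+1 + bm m *: Q m
                + a2 m *: (if m is m'.+1 then Q m' else 0))
  /\ a2 0%N = 0.

Definition nn_relations (a b : mindex r -> 'I_r -> R) : Prop :=
  [/\ forall (n : mindex r) (i j : 'I_r), i != j ->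
        b (mup n i) j - b n j = b (mup n j) i - b n i,
      forall (n : mindex r) (i j : 'I_r), i != j ->
        \sum_(k < r) a (mup n j) k - \sum_(k < r) a (mup n i) k
          = b (mup n j) i * b n j - b n i * b (mup n i) j
    & forall (n : mindex r) (i j : 'I_r), i != j -> (0 < n i)%N ->
        a (mup n j) i / a n i
          = (b n j - b n i) / (b (mdown n i) j - b (mdown n i) i)].

(* boundary conditions, in terms of the marginal coefficients a2 i m = a_m^2(mu_i),
   bm i m = b_m(mu_i) *)
Definition nn_boundary (a b : mindex r -> 'I_r -> R) (a2 bm : 'I_r -> nat -> R)
  : Prop :=
  [/\ forall (j : 'I_r) (m : nat), a (munit j m) j = a2 j m,
      forall (j : 'I_r) (m : nat), b (munit j m) j = bm j m
    & forall (i j : 'I_r) (m : nat), i != j -> a (munit i m) j = 0].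

End Defs.

(* Uniqueness is an induction on |n|.  The boundary conditions settle the
   multi-indices m e_j.  Otherwise n = k + e_j with n_i > 0 for some i <> j;
   the third relation at k gives a_{n,i} from level |n| - 1, since a_{k,i} <> 0,
   and then the first two relations at k give
   (b'_{n,i} - b_{n,i}) (b_{k,j} - b_{k,i}) = 0, where b_{k,j} <> b_{k,i}.

   That the true coefficients satisfy the relations is read off the recurrences:
   the coefficients of x^|n| and x^(|n|-1) in x P_n - P_{n+e_k} are b_{n,k} and
   sum_l a_{n,l}, and the two paths from n to n + e_i + e_j must agree.  For the
   third relation, integrating x^(n_i - 1) times the recurrence against mu_i
   gives I_n = a_{n,i} I_{n-e_i} for I_n = int x^(n_i) P_n dmu_i, which is
   nonzero by normality; combine with P_{n+e_j} - P_{n+e_i} = (b_{n,i} - b_{n,j}) P_n. *)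

From Pilot Require Import Defs.
From mathcomp Require Import all_boot all_algebra all_classical all_reals all_analysis.
From mathcomp Require Import ring lra.
(* polydiv also defines [mup]. *)
Import Defs.
Import GRing.Theory Num.Theory.
Local Open Scope ring_scope.

Section Moments.
Context {R : realType} {nu : {measure set R -> \bar R}}.
Hypothesis nu_moments : forall k, nu.-integrable setT (fun x : R => (x ^+ k)%:E).

Definition moment (k : nat) (p : {poly R}) : R := \int[nu]_x (x ^+ k * p.[x]).

Lemma integrable_moment k (p : {poly R}) :
  nu.-integrable setT (EFin \o (fun x => x ^+ k * p.[x])).
Proof.
elim/poly_ind: p k => [|p c IHp] k.
  apply: (eq_integrable measurableT _ _ _ (integrableZl measurableT 0 (nu_moments k))).
  by move=> x _ /=; rewrite horner0 mulr0 mul0e.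
have := integrableD measurableT (IHp k.+1) (integrableZl measurableT c (nu_moments k)).
apply: (eq_integrable measurableT) => /= x _.
by rewrite hornerD hornerMX hornerC -EFinM -EFinD exprS; congr EFin; ring.
Qed.

Lemma momentE k p : (\int[nu]_x ((x ^+ k * p.[x])%:E))%E = (moment k p)%:E.
Proof.
by rewrite /moment /Rintegral fineK //; apply: integrable_fin_num (integrable_moment k p).
Qed.

Lemma momentD k p q : moment k (p + q) = moment k p + moment k q.
Proof.
rewrite /moment -RintegralD //; try exact: integrable_moment.
by apply: eq_Rintegral => x _; rewrite hornerD mulrDr.
Qed.

Lemma momentZ k c p : moment k (c *: p) = c * moment k p.
Proof.
rewrite /moment -RintegralZl //; try exact: integrable_moment.
by apply: eq_Rintegral => x _; rewrite hornerZ mulrCA.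
Qed.

Lemma moment0 k : moment k 0 = 0.
Proof. by rewrite -(scale0r 0) momentZ mul0r. Qed.

Lemma moment_sum k (I : Type) (s : seq I) (F : I -> {poly R}) :
  moment k (\sum_(l <- s) F l) = \sum_(l <- s) moment k (F l).
Proof. exact: (big_morph _ (momentD k) (moment0 k)). Qed.

Lemma momentXM k p : moment k ('X * p) = moment k.+1 p.
Proof. by apply: eq_Rintegral => x _; rewrite [('X * p)]mulrC hornerMX exprS; ring. Qed.

End Moments.

Section MultiIndex.
Context {r : nat}.
Implicit Types (n : mindex r) (i j k : 'I_r) (m : nat).

Lemma mupE n i k : mup n i k = (n k + (k == i))%N.
Proof. by rewrite ffunE. Qed.

Lemma mdownE n i k : mdown n i k = (n k - (k == i))%N.
Proof. by rewrite ffunE. Qed.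

Lemma munitE i m k : munit i m k = if k == i then m else 0%N.
Proof. by rewrite ffunE. Qed.

Lemma mup_id n i : mup n i i = (n i).+1.
Proof. by rewrite mupE eqxx addn1. Qed.

Lemma mup_neq n i k : k != i -> mup n i k = n k.
Proof. by move=> /negbTE ki; rewrite mupE ki addn0. Qed.

Lemma mdown_neq n i k : k != i -> mdown n i k = n k.
Proof. by move=> /negbTE ki; rewrite mdownE ki subn0. Qed.

Lemma mabs_mup n i : mabs (mup n i) = (mabs n).+1.
Proof.
rewrite /mabs (bigD1 i) //= [in RHS](bigD1 i) //= mup_id addSn.
by congr (_ + _)%N.+1; apply: eq_bigr => k ki; rewrite mup_neq.
Qed.

Lemma mdownK n i : (0 < n i)%N -> mup (mdown n i) i = n.
Proof.
move=> ni; apply/ffunP => k; rewrite mupE mdownE.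
by case: eqP => [->|_]; rewrite ?subn0 ?addn0 // subnK.
Qed.

Lemma mupC n i j : mup (mup n i) j = mup (mup n j) i.
Proof. by apply/ffunP => k; rewrite !mupE -!addnA [((k == i) + _)%N]addnC. Qed.

Lemma mdown_mupC n i j : i != j -> mdown (mup n j) i = mup (mdown n i) j.
Proof.
move=> ij; apply/ffunP => k; rewrite !(mdownE, mupE).
case: (eqVneq k i) => [->|ki]; first by rewrite (negbTE ij) !addn0.
by rewrite !subn0.
Qed.

Lemma mabs_mdown n i : (0 < n i)%N -> mabs (mdown n i) = (mabs n).-1.
Proof. by move=> ni; rewrite -{2}(mdownK _ _ ni) mabs_mup. Qed.

Lemma munitS i m : mup (munit i m) i = munit i m.+1.
Proof. by apply/ffunP => k; rewrite mupE !munitE; case: eqP; rewrite ?addn1 ?addn0. Qed.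

Lemma mabs_munit i m : mabs (munit i m) = m.
Proof.
rewrite /mabs (bigD1 i) //= munitE eqxx big1 ?addn0 // => k /negbTE ki.
by rewrite munitE ki.
Qed.

Lemma munit_neq i m k : k != i -> munit i m k = 0%N.
Proof. by move=> /negbTE ki; rewrite munitE ki. Qed.

Lemma mindex_support n i : (exists2 j, j != i & (0 < n j)%N) \/ n = munit i (n i).
Proof.
have [/existsP [j /andP [ji nj]]|/existsPn n0] :=
  boolP [exists j, (j != i) && (0 < n j)%N]; first by left; exists j.
right; apply/ffunP => k; rewrite munitE; case: eqP => [->//|/eqP ki].
by move: (n0 k); rewrite ki lt0n negbK => /eqP.
Qed.

Lemma mabs_eq0 n i : mabs n = 0%N -> n = munit i 0.
Proof.
move=> n0; apply/ffunP => k; rewrite munitE if_same.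
have : (n k <= mabs n)%N by rewrite /mabs (bigD1 k) //= leq_addr.
by rewrite n0 leqn0 => /eqP.
Qed.

End MultiIndex.

Section Recurrence.
Context {R : realType} {r : nat} {mu : 'I_r -> {measure set R -> \bar R}}
  {P : mindex r -> {poly R}} {a b : mindex r -> 'I_r -> R}.
Hypotheses (mu_moments : finite_moments mu) (P_mop : forall n, is_mop mu n (P n))
  (P_rec : nn_recurrence P a b).

Implicit Types (n : mindex r) (i j l : 'I_r) (k : nat).
Local Notation mom i := (@moment R (mu i)).

Lemma P_monic n : P n \is monic. Proof. by case: (P_mop n). Qed.

Lemma size_P n : size (P n) = (mabs n).+1. Proof. by case: (P_mop n). Qed.

Lemma P_lead n : (P n)`_(mabs n) = 1.
Proof. by have := P_monic n; rewrite monicE lead_coefE size_P => /eqP. Qed.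

Lemma P_coef_gt n k : (mabs n < k)%N -> (P n)`_k = 0.
Proof. by move=> nk; rewrite nth_default // size_P. Qed.

Lemma mom_P_orth n j k : (k < n j)%N -> mom j k (P n) = 0.
Proof. by case: (P_mop n) => _ _ orth /orth; rewrite momentE // => -[]. Qed.

Lemma a_eq0 n j : n j = 0%N -> a n j = 0.
Proof. exact: P_rec.2. Qed.

(* Unlike in [nn_recurrence], the sum runs over all l: the extra terms vanish
   because a_{n,l} = 0 when n_l = 0. *)
Definition lower n := \sum_(l < r) a n l *: P (mdown n l).

Lemma nn_recE n l : 'X * P n = P (mup n l) + b n l *: P n + lower n.
Proof.
rewrite (P_rec.1 n l) /lower big_mkcond /=; congr (_ + _); apply: eq_bigr => j _.
by case: ifP => // /negbT; rewrite lt0n negbK => /eqP /a_eq0 ->; rewrite scale0r.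
Qed.

Lemma coef_lower_term n l k :
  (mabs n <= k.+1)%N -> (a n l *: P (mdown n l))`_k = if k.+1 == mabs n then a n l else 0.
Proof.
move=> nk; have [nl0|nl] := posnP (n l); first by rewrite a_eq0 // scale0r coef0 if_same.
have dn : mabs n = (mabs (mdown n l)).+1 by rewrite -{1}(mdownK _ _ nl) mabs_mup.
rewrite coefZ dn eqSS; rewrite dn ltnS in nk.
case: eqVneq => [->|nek]; first by rewrite P_lead mulr1.
by rewrite P_coef_gt ?mulr0 // ltn_neqAle eq_sym nek.
Qed.

Lemma coef_lower_ge n k : (mabs n <= k)%N -> (lower n)`_k = 0.
Proof.
move=> nk; rewrite coef_sum big1 // => l _.
by rewrite coef_lower_term ?(leq_trans nk) // gtn_eqF.
Qed.

Lemma coef_lower_mup n i : (lower (mup n i))`_(mabs n) = \sum_(l < r) a (mup n i) l.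
Proof.
by rewrite coef_sum; apply: eq_bigr => l _; rewrite coef_lower_term mabs_mup ?eqxx.
Qed.

Lemma P_mup_sub n i j : P (mup n j) = P (mup n i) + (b n i - b n j) *: P n.
Proof.
have e : P (mup n i) + b n i *: P n = P (mup n j) + b n j *: P n.
  by apply: (addIr (lower n)); rewrite -!nn_recE.
by rewrite scalerBl addrA e addrK.
Qed.

Lemma b_coef n l : b n l = ('X * P n)`_(mabs n) - (P (mup n l))`_(mabs n).
Proof.
have := congr1 (fun p : {poly R} => p`_(mabs n)) (nn_recE n l).
by rewrite /= !coefD coefZ P_lead coef_lower_ge // addr0 mulr1 => ->; ring.
Qed.

Lemma sum_a_coef n i l :
  \sum_(j < r) a (mup n i) j = ('X * P (mup n i))`_(mabs n)
    - (P (mup (mup n i) l))`_(mabs n) - b (mup n i) l * (P (mup n i))`_(mabs n).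
Proof.
have := congr1 (fun p : {poly R} => p`_(mabs n)) (nn_recE (mup n i) l).
by rewrite /= !coefD coefZ coef_lower_mup => ->; ring.
Qed.

Lemma nn_relation_b n i j : b (mup n i) j - b n j = b (mup n j) i - b n i.
Proof. by rewrite !b_coef !mabs_mup !coefXM [mup (mup n j) i]mupC /=; ring. Qed.

Lemma nn_relation_a n i j :
  \sum_(l < r) a (mup n j) l - \sum_(l < r) a (mup n i) l
    = b (mup n j) i * b n j - b n i * b (mup n i) j.
Proof.
have bni := b_coef n i; have bnj := b_coef n j.
have eXPj : ('X * P (mup n j))`_(mabs n)
    = ('X * P (mup n i))`_(mabs n) + (b n i - b n j) * ('X * P n)`_(mabs n).
  by rewrite (P_mup_sub n i j) mulrDr -scalerAr coefD coefZ.
have ebij : b (mup n i) j = b (mup n j) i + b n j - b n i.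
  by have := nn_relation_b n i j; lra.
rewrite (sum_a_coef n j i) (sum_a_coef n i j) [mup (mup n j) i]mupC.
by rewrite eXPj ebij; nra.
Qed.

Hypothesis normal : normal_system mu.

(* Otherwise P_{n+e_i} + P_n would be a second type II polynomial for n + e_i. *)
Lemma mom_P_neq0 n i : mom i (n i) (P n) != 0.
Proof.
apply/eqP => I0; have [p [_ p_uniq]] := normal (mup n i).
have lt_size : (size (P n) < size (P (mup n i)))%N by rewrite !size_P mabs_mup.
have : is_mop mu (mup n i) (P (mup n i) + P n).
  split; first by rewrite monicE lead_coefDl // -monicE P_monic.
    by rewrite size_polyDl // size_P.
  move=> j k kj; rewrite momentE // momentD // mom_P_orth // add0r; move: kj.
  have [->|ji] := eqVneq j i; last by rewrite mup_neq // => /mom_P_orth ->.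
  by rewrite mup_id ltnS leq_eqVlt => /orP [/eqP ->|/mom_P_orth ->]; rewrite ?I0.
move/p_uniq; rewrite (p_uniq _ (P_mop _)) -{1}[P (mup n i)]addr0 => /addrI Pn0.
by have := P_monic n; rewrite -Pn0 monicE lead_coef0 eq_sym oner_eq0.
Qed.

Lemma mom_P_rec n i : (0 < n i)%N ->
  mom i (n i) (P n) = a n i * mom i (n i).-1 (P (mdown n i)).
Proof.
move=> ni; have := congr1 (mom i (n i).-1) (nn_recE n i).
rewrite momentXM prednK // => ->.
rewrite !momentD // momentZ // mom_P_orth ?mup_id ?ltnS ?leq_pred //.
rewrite mom_P_orth ?ltn_predL // /lower moment_sum // (bigD1 i) //= big1 ?addr0.
  by rewrite momentZ // mulr0 !add0r.
by move=> l li; rewrite momentZ // mom_P_orth ?mulr0 // mdown_neq 1?eq_sym // ltn_predL.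
Qed.

Lemma a_neq0 n i : (0 < n i)%N -> a n i != 0.
Proof.
by move=> ni; apply: contraNneq (mom_P_neq0 n i) => a0; rewrite mom_P_rec // a0 mul0r.
Qed.

Lemma mom_P_mup_sub n i j :
  mom i (n i) (P (mup n j)) = (b n i - b n j) * mom i (n i) (P n).
Proof. by rewrite (P_mup_sub n i j) momentD // momentZ // mom_P_orth ?add0r // mup_id. Qed.

Hypothesis b_inj : forall n i j, i != j -> b n i != b n j.

Lemma nn_relation_ratio n i j : i != j -> (0 < n i)%N ->
  a (mup n j) i / a n i = (b n j - b n i) / (b (mdown n i) j - b (mdown n i) i).
Proof.
move=> ij ni; set m := mdown n i.
have mi : m i = (n i).-1 by rewrite mdownE eqxx subn1.
have nji : mup n j i = n i by rewrite mup_neq.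
have Im_neq0 := mom_P_neq0 m i; rewrite mi in Im_neq0.
have Inj := mom_P_rec (mup n j) i; rewrite nji mdown_mupC // -/m in Inj.
have := mom_P_mup_sub n i j; rewrite Inj ?nji // mom_P_rec // -mi mom_P_mup_sub mi.
rewrite !mulrA => /(mulIf Im_neq0) e.
have an_neq0 := a_neq0 n i ni.
have bm_neq0 : b m j - b m i != 0 by rewrite subr_eq0 b_inj // eq_sym.
by apply/eqP; rewrite eqr_div //; apply/eqP; lra.
Qed.

Section Marginals.
Context {Pm : 'I_r -> nat -> {poly R}} {a2 bm : 'I_r -> nat -> R}.
Hypotheses (Pm_op : forall i m, is_op (mu i) m (Pm i m))
  (Pm_rec : forall i, three_term (Pm i) (a2 i) (bm i)).

Lemma P_munit j m : P (munit j m) = Pm j m.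
Proof.
have [p [_ p_uniq]] := normal (munit j m).
rewrite -(p_uniq _ (P_mop _)); apply: p_uniq.
have [Pm_monic size_Pm Pm_orth] := Pm_op j m; split; rewrite ?mabs_munit //.
by move=> l k; rewrite munitE; case: eqP => [->|//]; apply: Pm_orth.
Qed.

Lemma Pm_lead j m : (Pm j m)`_m = 1.
Proof. by rewrite -P_munit -{2}(mabs_munit j m) P_lead. Qed.

Lemma Pm_coef_gt j m k : (m < k)%N -> (Pm j m)`_k = 0.
Proof. by rewrite -P_munit -{1}(mabs_munit j m); apply: P_coef_gt. Qed.

Lemma lower_munit j m :
  lower (munit j m) = a (munit j m) j *: (if m is m'.+1 then Pm j m' else 0).
Proof.
rewrite /lower (bigD1 j) //= big1 => [|l lj]; last by rewrite a_eq0 ?scale0r ?munit_neq.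
case: m => [|m]; first by rewrite a_eq0 ?munitE ?eqxx // !scale0r addr0.
by rewrite addr0 -P_munit; congr (_ *: P _); apply/ffunP => k; rewrite !(mdownE, munitE);
  case: eqP; rewrite ?subn1 ?subn0.
Qed.

Lemma nn_marginal j m : b (munit j m) j = bm j m /\ a (munit j m) j = a2 j m.
Proof.
have [Pm_rec_m a2_0] := Pm_rec j.
have e := esym (Pm_rec_m m); rewrite -!P_munit (nn_recE _ j) munitS lower_munit !P_munit in e.
have e_m := congr1 (fun p : {poly R} => p`_m) e; rewrite /= !coefD !coefZ Pm_lead in e_m.
case: m e e_m => [|m] e e_m.
  rewrite a2_0 a_eq0 ?munitE ?eqxx // !coef0 in e_m *.
  by move: e_m; rewrite !mulr1 !mulr0 !addr0 => /addrI.
have eb : b (munit j m.+1) j = bm j m.+1.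
  by move: e_m; rewrite (@Pm_coef_gt j m m.+1) // !mulr1 !mulr0 !addr0 => /addrI.
have := congr1 (fun p : {poly R} => p`_m) e.
by rewrite /= !coefD !coefZ eb Pm_lead !mulr1 => /addrI.
Qed.

End Marginals.

End Recurrence.

Section Uniqueness.
Context {R : realType} {r : nat} {a b a' b' : mindex r -> 'I_r -> R}
  {a2 bm : 'I_r -> nat -> R}.
Implicit Types (n : mindex r) (i j : 'I_r).
Hypotheses (a_supp : forall n j, n j = 0%N -> a n j = 0)
  (a'_supp : forall n j, n j = 0%N -> a' n j = 0)
  (rel : nn_relations a b) (rel' : nn_relations a' b')
  (bnd : nn_boundary a b a2 bm) (bnd' : nn_boundary a' b' a2 bm)
  (b_inj : forall n i j, i != j -> b n i != b n j)
  (a_neq0 : forall n i, (0 < n i)%N -> a n i != 0).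

Let agree n := (forall j, a' n j = a n j) /\ (forall j, b' n j = b n j).

Section Step.
Variable N : nat.
Hypothesis agree_le : forall n, (mabs n <= N)%N -> agree n.

Lemma nn_a_step n i : mabs n = N.+1 -> a' n i = a n i.
Proof.
move=> nN; have [ni0|ni] := posnP (n i); first by rewrite a_supp ?a'_supp.
have [[j ji nj]|->] := mindex_support n i; last by case: bnd bnd' => -> _ _ [-> _ _].
set k := mdown n j; have ij : i != j by rewrite eq_sym.
have n_k : n = mup k j by rewrite mdownK.
have kN : mabs k = N by rewrite mabs_mdown // nN.
have ki : (0 < k i)%N by rewrite mdown_neq.
have [ak bk] := agree_le k (eq_leq kN).
have kiN : (mabs (mdown k i) <= N)%N by rewrite mabs_mdown // kN leq_pred.
have [_ bki] := agree_le _ kiN.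
have [_ _ ratio] := rel; have [_ _ ratio'] := rel'.
have := ratio' k i j ij ki; rewrite ak !bk !bki -ratio // -n_k.
by move/(mulIf (invr_neq0 (a_neq0 _ _ ki))).
Qed.

Lemma nn_b_step n i : mabs n = N.+1 -> b' n i = b n i.
Proof.
move=> nN; have [[j ji nj]|->] := mindex_support n i; last by case: bnd bnd' => _ -> _ [_ -> _].
set k := mdown n j; have ij : i != j by rewrite eq_sym.
have n_k : n = mup k j by rewrite mdownK.
have kN : mabs k = N by rewrite mabs_mdown // nN.
have [_ bk] := agree_le k (eq_leq kN).
have sum_a' m : mabs m = N.+1 -> \sum_(l < r) a' m l = \sum_(l < r) a m l.
  by move=> mN; apply: eq_bigr => l _; apply: nn_a_step.
have [/(_ k i j ij) e1 /(_ k i j ij) e2 _] := rel.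
have [/(_ k i j ij) e1' /(_ k i j ij) e2' _] := rel'.
rewrite !sum_a' ?mabs_mup ?kN // !bk -n_k in e2'; rewrite !bk -n_k in e1'.
rewrite -n_k in e1 e2.
have bk_neq0 : b k j - b k i != 0 by rewrite subr_eq0 b_inj.
have eb' : b' (mup k i) j = b' n i - b k i + b k j by lra.
have eb : b (mup k i) j = b n i - b k i + b k j by lra.
rewrite eb' in e2'; rewrite eb in e2.
have : (b' n i - b n i) * (b k j - b k i) = 0 by lra.
by move/eqP; rewrite mulf_eq0 (negbTE bk_neq0) orbF subr_eq0 => /eqP.
Qed.

End Step.

Lemma nn_coef_unique :
  (forall n j, a' n j = a n j) /\ (forall n j, b' n j = b n j).
Proof.
suff agree_all n : agree n by split=> n j; have [] := agree_all n.
elim: {n}(mabs n) {-2}n (leqnn (mabs n)) => [|N IHN] n.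
  rewrite leqn0 => /eqP n0; split=> j; rewrite (mabs_eq0 _ j n0).
    by rewrite a_supp ?a'_supp // munitE eqxx.
  by case: bnd bnd' => _ -> _ [_ -> _].
rewrite leq_eqVlt ltnS => /orP [/eqP nN|]; last exact: IHN.
by split=> i; [apply: nn_a_step IHN n i nN | apply: nn_b_step IHN n i nN].
Qed.

End Uniqueness.

Theorem theorem3p3 (R : realType) (r : nat)
  (mu : 'I_r -> {measure set R -> \bar R})
  (P : mindex r -> {poly R}) (a b : mindex r -> 'I_r -> R)
  (Pm : 'I_r -> nat -> {poly R}) (a2 bm : 'I_r -> nat -> R) :
  (1 < r)%N ->
  finite_moments mu ->
  normal_system mu ->
  (forall n : mindex r, is_mop mu n (P n)) ->
  nn_recurrence P a b ->
  (forall (i : 'I_r) (m : nat), is_op (mu i) m (Pm i m)) ->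
  (forall i : 'I_r, three_term (Pm i) (a2 i) (bm i)) ->
  (forall (n : mindex r) (i j : 'I_r), i != j -> b n i != b n j) ->
  forall a' b' : mindex r -> 'I_r -> R,
    (forall (n : mindex r) (j : 'I_r), n j = 0%N -> a' n j = 0) ->
    nn_relations a' b' ->
    nn_boundary a' b' a2 bm ->
    (forall (n : mindex r) (j : 'I_r), a' n j = a n j) /\
    (forall (n : mindex r) (j : 'I_r), b' n j = b n j).
Proof.
move=> _ mu_mom normal P_mop P_rec Pm_op Pm_rec b_inj a' b' a'_supp rel' bnd'.
apply: (nn_coef_unique (a_eq0 P_rec) a'_supp _ rel' _ bnd' b_inj).
- split=> [n i j _|n i j _|n i j]; first exact: nn_relation_b P_mop P_rec n i j.
    exact: nn_relation_a P_mop P_rec n i j.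
  exact: nn_relation_ratio mu_mom P_mop P_rec normal b_inj n i j.
- have marginal := nn_marginal P_mop P_rec normal Pm_op Pm_rec.
  split=> [j m|j m|i j m ij]; try by have [] := marginal j m.
  by rewrite (a_eq0 P_rec) // munit_neq // eq_sym.
- exact: a_neq0 mu_mom P_mop P_rec normal.
Qed.
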